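(* Let $R$ be a skew field, $a_1,\dots,a_4\in R^*$, $A_i=a_ia_{i+1}a_{i+2}a_{i+3}$ (indices mod $4$) with $1+A_i\ne0$ for all $i$, and define $$b_1=(1+A_3^{-1})a_3,\quad b_2=(1+A_4)^{-1}a_4,\quad b_3=(1+A_1^{-1})a_1,\quad b_4=(1+A_2)^{-1}a_2,$$ and $B_i=b_ib_{i+1}b_{i+2}b_{i+3}$. Then for all $i\in\mathbb Z/4\mathbb Z$: $$b_ib_{i+1}=(a_ia_{i+1})^{-1},\qquad A_i=B_{i+2}^{-1}.$$ *)

From mathcomp Require Import all_boot all_order all_algebra.
Set Implicit Arguments. Unset Strict Implicit. Unset Printing Implicit Defensive.
Import GRing.Theory.
Local Open Scope ring_scope.

Definition skew_field (R : unitRingType) : Prop :=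
  forall x : R, x != 0 -> x \is a GRing.unit.

(* Indices in Z/4Z are represented by 'I_4 = {0,1,2,3};
   paper index j (1..4) corresponds to ordinal j-1. *)
Definition sh (k : nat) (i : 'I_4) : 'I_4 := inord ((i + k) %% 4).

Definition cycprod (R : unitRingType) (x : 'I_4 -> R) (i : 'I_4) : R :=
  x i * x (sh 1 i) * x (sh 2 i) * x (sh 3 i).

Definition bfam (R : unitRingType) (a : 'I_4 -> R) (i : 'I_4) : R :=
  let A := cycprod a in
  match nat_of_ord i with
  | 0 => (1 + (A (inord 2))^-1) * a (inord 2)
  | 1 => (1 + A (inord 3))^-1 * a (inord 3)
  | 2 => (1 + (A (inord 0))^-1) * a (inord 0)
  | _ => (1 + A (inord 1))^-1 * a (inord 1)
  end.

From mathcomp Require Import all_boot all_order all_algebra.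
Set Implicit Arguments.
Unset Strict Implicit.
Unset Printing Implicit Defensive.
Import GRing.Theory.
Local Open Scope ring_scope.

(* Write x = a_(i+2) and y = a_(i+3) a_i a_(i+1), so that A_(i+2) = x y and
   A_(i+3) = y x.  For units x, y one has (1 + (xy)^-1) x = y^-1 (1 + yx) and
   x (1 + (yx)^-1) = (1 + xy) y^-1; hence in b_i b_(i+1), whichever of the two
   shapes it has, the factor 1 + A cancels against its inverse and what is left
   is y^-1 a_(i+3) = (a_i a_(i+1))^-1.  Multiplying two consecutive such pairs
   gives B_(i+2) = (a_(i+2) a_(i+3))^-1 (a_i a_(i+1))^-1 = A_i^-1. *)

Section Twist.
Variables (R : unitRingType) (x y : R).
Hypotheses (ux : x \is a GRing.unit) (uy : y \is a GRing.unit).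

Lemma mul1DVM_l : (1 + (x * y)^-1) * x = y^-1 * (1 + y * x).
Proof.
by rewrite invrM // mulrDl mulrDr mul1r mulr1 (mulrVK ux) (mulKr uy) addrC.
Qed.

Lemma mul1DVM_r : x * (1 + (y * x)^-1) = (1 + x * y) * y^-1.
Proof.
by rewrite invrM // mulrDr mulrDl mul1r mulr1 !mulrA (mulrV ux) mul1r (mulrK uy) addrC.
Qed.

Lemma twist_1DVM : 1 + y * x \is a GRing.unit ->
  (1 + (x * y)^-1) * x * (1 + y * x)^-1 = y^-1.
Proof. by move=> u1; rewrite mul1DVM_l mulrK. Qed.

Lemma twist_V1DM : 1 + x * y \is a GRing.unit ->
  (1 + x * y)^-1 * x * (1 + (y * x)^-1) = y^-1.
Proof. by move=> u1; rewrite -mulrA mul1DVM_r mulKr. Qed.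

End Twist.

Lemma shD (m n : nat) (i : 'I_4) : sh m (sh n i) = sh ((n + m) %% 4) i.
Proof. by rewrite /sh inordK ?ltn_pmod // modnDml -addnA modnDmr. Qed.

Lemma sh0 (i : 'I_4) : sh 0 i = i.
Proof. by rewrite /sh addn0 modn_small ?inord_val. Qed.

Lemma odd_sh1 (i : 'I_4) : odd (sh 1 i) = ~~ odd i.
Proof. by case: i => [[|[|[|[|n]]]] lti] //; rewrite /sh inordK. Qed.

Lemma bfamE (R : unitRingType) (a : 'I_4 -> R) (i : 'I_4) :
  bfam a i = if odd i then (1 + cycprod a (sh 2 i))^-1 * a (sh 2 i)
             else (1 + (cycprod a (sh 2 i))^-1) * a (sh 2 i).
Proof. by case: i => [[|[|[|[|n]]]] lti]. Qed.

Section Bfam.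
Variables (R : unitRingType) (a : 'I_4 -> R).
Hypotheses (ua : forall i, a i \is a GRing.unit)
           (uA : forall i, 1 + cycprod a i \is a GRing.unit).

Lemma bfam_mul_sh1 (i : 'I_4) :
  bfam a i * bfam a (sh 1 i) = (a i * a (sh 1 i))^-1.
Proof.
set y := a (sh 3 i) * (a i * a (sh 1 i)).
have uy : y \is a GRing.unit by rewrite !unitrMl.
have Aj : cycprod a (sh 2 i) = a (sh 2 i) * y.
  by rewrite /cycprod /y !shD sh0 !mulrA.
have Aj1 : cycprod a (sh 3 i) = y * a (sh 2 i).
  by rewrite /cycprod /y !shD sh0 !mulrA.
have uAj : 1 + a (sh 2 i) * y \is a GRing.unit by rewrite -Aj.
have uAj1 : 1 + y * a (sh 2 i) \is a GRing.unit by rewrite -Aj1.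
have -> : (a i * a (sh 1 i))^-1 = y^-1 * a (sh 3 i).
  by rewrite /y [in RHS]invrM ?unitrMl // (mulrVK (ua _)).
rewrite !bfamE odd_sh1 shD Aj Aj1.
by case: (odd i); rewrite /= mulrA ?twist_V1DM ?twist_1DVM.
Qed.

End Bfam.

Lemma cycprod_sh2_inv (R : unitRingType) (a b : 'I_4 -> R) :
    (forall i, a i \is a GRing.unit) ->
    (forall i, b i * b (sh 1 i) = (a i * a (sh 1 i))^-1) ->
  forall i, cycprod b (sh 2 i) = (cycprod a i)^-1.
Proof.
move=> ua hb i; have hb2 := hb (sh 2 i); rewrite shD in hb2.
rewrite /cycprod !shD sh0 -(mulrA _ (b i)) hb hb2 -invrM ?unitrMl //.
by rewrite !mulrA.
Qed.

Theorem lemma4p4 (R : unitRingType) (hR : skew_field R) (a : 'I_4 -> R)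
  (ha : forall i, a i != 0) (hA : forall i, 1 + cycprod a i != 0) :
  forall i : 'I_4,
    bfam a i * bfam a (sh 1 i) = (a i * a (sh 1 i))^-1 /\
    cycprod a i = (cycprod (bfam a) (sh 2 i))^-1.
Proof.
have ua i : a i \is a GRing.unit by apply/hR/ha.
have uA i : 1 + cycprod a i \is a GRing.unit by apply/hR/hA.
have hb := bfam_mul_sh1 ua uA.
move=> i; split; first exact: hb.
by rewrite (cycprod_sh2_inv ua hb) invrK.
Qed.
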